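(* For every $N$, there exists a map $f:\mathcal D_N\to\{0,1\}$ that is the restriction to $\mathcal D_N$ of a linear function on $\mathbb R^N$, such that every function $\bar f:\{0,1\}^N\to\{0,1\}$ agreeing with $f$ on $\mathcal D_N$ has degree at least $\Omega(\log N)$.
   Context: $\mathcal D_N=\{e_1,\dots,e_N\}\subseteq\{0,1\}^N$ is the set of standard basis vectors. The degree of a Boolean function $\bar f:\{0,1\}^N\to\{0,1\}$ is the degree of its unique multilinear polynomial representation. *)

From HB Require Import structures.
From mathcomp Require Import all_boot all_order all_algebra.
From mathcomp Require Import Rstruct.
From Stdlib Require Reals.
Set Implicit Arguments. Unset Strict Implicit. Unset Printing Implicit Defensive.
Import Order.TTheory GRing.Theory Num.Theory.
Local Open Scope ring_scope.

Definition cube (N : nat) := 'I_N -> bool.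

Definition basis_vec (N : nat) (i : 'I_N) : cube N := fun j => j == i.

Definition ml_eval (N : nat) (c : {set 'I_N} -> Rdefinitions.R) (x : cube N) : Rdefinitions.R :=
  \sum_(S : {set 'I_N}) c S * \prod_(i in S) ((x i)%:R : Rdefinitions.R).

Definition ml_rep (N : nat) (g : cube N -> bool) (c : {set 'I_N} -> Rdefinitions.R) : Prop :=
  forall x : cube N, ((g x)%:R : Rdefinitions.R) = ml_eval c x.

(* Quantifying over all
   representations is equivalent by uniqueness of the representation. *)
Definition degree_ge (N : nat) (g : cube N -> bool) (D : Rdefinitions.R) : Prop :=
  forall c : {set 'I_N} -> Rdefinitions.R, ml_rep g c ->
    exists S : {set 'I_N}, c S <> 0 /\ D <= (#|S|%:R : Rdefinitions.R).

(* f : D_N -> {0,1}, given by its values f i = f(e_i), is the restriction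
   to D_N of a linear map x |-> sum_j a_j x_j on Rdefinitions.R^N. *)
Definition restr_linear (N : nat) (f : 'I_N -> bool) : Prop :=
  exists a : 'I_N -> Rdefinitions.R, forall i : 'I_N,
    ((f i)%:R : Rdefinitions.R) = \sum_(j < N) a j * ((basis_vec i j)%:R : Rdefinitions.R).

(* Take f(e_i) = parity of i, the restriction of the linear map x |-> sum_i (i mod 2) x_i.
   If g extends f and has degree d, at least floor(N/2) coordinates i satisfy
   g(e_i) <> g(0).  For each of them the discrete derivative
   x |-> g(x with x_i = 1) - g(x with x_i = 0) is a multilinear polynomial of degree
   <= d - 1 that does not vanish at 0, hence (Schwartz-Zippel on the cube) it is
   nonzero on at least 2^(N-d+1) points: the influence of i is at least 2^(1-d).
   On the other hand, Fourier expansion of the +-1 version of g shows that the total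
   influence sum_S |S| ghat(S)^2 is at most d.  Thus floor(N/2) 2^(1-d) <= d, which
   gives N <= 4^d, i.e. d >= ln N / 2. *)

From HB Require Import structures.
From mathcomp Require Import all_boot all_order all_algebra.
From mathcomp Require Import Rstruct ring lra zify.
From Stdlib Require Reals Lra.
From Stdlib Require Import FunctionalExtensionality.
Set Implicit Arguments. Unset Strict Implicit. Unset Printing Implicit Defensive.
Import Order.TTheory GRing.Theory Num.Theory.
Local Open Scope ring_scope.

Section BooleanFourier.
Variables (R : numFieldType) (n : nat).
Implicit Types (A B S T : {set 'I_n}) (F G : {set 'I_n} -> R).

Definition toggle (u : 'I_n) A := if u \in A then A :\ u else u |: A.

Lemma in_toggle u A x : (x \in toggle u A) = (x \in A) (+) (x == u).
Proof.
rewrite /toggle; case: (boolP (u \in A)) => uA; rewrite !inE;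
  case: (eqVneq x u) => [->|xu]; rewrite ?uA ?(negbTE uA) ?addbF ?addbT //.
Qed.

Lemma toggleK u : involutive (toggle u).
Proof. by move=> A; apply/setP => x; rewrite !in_toggle -addbA addbb addbF. Qed.

Lemma card_sets_ord : #|{set 'I_n}| = (2 ^ n)%N.
Proof. by rewrite -cardsT -powersetT card_powerset cardsT card_ord. Qed.

Lemma pow2_neq0 : ((2 ^ n)%:R : R) != 0.
Proof. by rewrite pnatr_eq0 expn_eq0. Qed.

Definition chi S A : R := (-1) ^+ #|S :&: A|.

Lemma chiC S A : chi S A = chi A S.
Proof. by rewrite /chi setIC. Qed.

Lemma chi_sqr S A : chi S A * chi S A = 1.
Proof. by rewrite /chi -exprMn mulrNN mulr1 expr1n. Qed.

Lemma chi_toggle u S A : chi S (toggle u A) = if u \in S then - chi S A else chi S A.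
Proof.
have [uS|uS] := boolP (u \in S); last first.
  rewrite /chi (_ : S :&: toggle u A = S :&: A) //.
  apply/setP => x; rewrite !inE in_toggle.
  by case: (eqVneq x u) => [->|xu]; rewrite ?(negbTE uS) ?addbF.
rewrite /chi /toggle; have [uA|uA] := boolP (u \in A).
  by rewrite setIDA (cardsD1 u (S :&: A)) inE uS uA add1n exprS mulN1r opprK.
have uSA : u \notin S :&: A by rewrite inE (negbTE uA) andbF.
rewrite setIUr (setIidPr _) ?sub1set //.
by rewrite cardsU1 uSA add1n exprS mulN1r.
Qed.

Lemma sum_toggle_opp u F : (forall A, F (toggle u A) = - F A) -> \sum_A F A = 0.
Proof.
move=> FN; have /eqP : \sum_A F A = - \sum_A F A.
  rewrite {1}(reindex_inj (can_inj (toggleK u))) -sumrN.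
  by apply: eq_bigr => A _; rewrite FN.
by rewrite -subr_eq0 opprK -mulr2n -mulr_natr mulf_eq0 pnatr_eq0 orbF => /eqP.
Qed.

Lemma chi_orthogonal S T :
  \sum_A chi S A * chi T A = if S == T then (2 ^ n)%:R else 0.
Proof.
have [<-|neqST] := eqVneq S T.
  by rewrite (eq_bigr (fun _ => 1)) ?sumr_const ?card_sets_ord // => A _; rewrite chi_sqr.
have [u uST] : exists u, (u \in S) != (u \in T).
  apply/existsP; apply: contraNT neqST => /existsPn eqST.
  by apply/eqP/setP => u; move/negPn/eqP: (eqST u).
apply: (@sum_toggle_opp u) => A; rewrite !chi_toggle.
by move: uST; case: (u \in S); case: (u \in T); rewrite //= ?mulNr ?mulrN.
Qed.

Lemma subset_toggle u T A : u \notin T -> (T \subset toggle u A) = (T \subset A).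
Proof.
move=> uT; apply/subsetP/subsetP => sTA x xT; have := sTA x xT; rewrite in_toggle;
  have -> : (x == u) = false by apply: contraNF uT => /eqP <-.
all: by rewrite addbF.
Qed.

Lemma sum_chi_subset_eq0 u S T : u \in S -> u \notin T ->
  \sum_(A : {set 'I_n}) (T \subset A)%:R * chi S A = 0.
Proof.
move=> uS uT; apply: (@sum_toggle_opp u) => A.
by rewrite chi_toggle uS subset_toggle // mulrN.
Qed.

Definition fourier F S := ((2 ^ n)%:R)^-1 * \sum_A F A * chi S A.

Lemma fourier_inversion F A : F A = \sum_S fourier F S * chi S A.
Proof.
rewrite /fourier.
under eq_bigr => S _ do rewrite -mulrA mulr_suml.
rewrite -mulr_sumr exchange_big /=.
under eq_bigr => B _ do under eq_bigr => S _ do rewrite -mulrA (chiC S B) (chiC S A).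
under eq_bigr => B _ do rewrite -mulr_sumr chi_orthogonal.
rewrite (bigD1 A) //= eqxx big1 ?addr0 => [|B /negbTE ->]; last by rewrite mulr0.
by rewrite mulrCA mulVf ?pow2_neq0 ?mulr1.
Qed.

Lemma sum_mul_chi F S : \sum_A F A * chi S A = (2 ^ n)%:R * fourier F S.
Proof. by rewrite /fourier mulVKf ?pow2_neq0. Qed.

Lemma plancherel F G :
  \sum_A F A * G A = (2 ^ n)%:R * \sum_S fourier F S * fourier G S.
Proof.
under eq_bigr => A _ do rewrite (fourier_inversion G A) mulr_sumr.
rewrite exchange_big mulr_sumr /=; apply: eq_bigr => S _.
under eq_bigr => A _ do rewrite mulrCA.
by rewrite -mulr_sumr sum_mul_chi mulrCA (mulrC (fourier G S)).
Qed.

Lemma fourier_toggle u F S :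
  fourier (fun A => F (toggle u A)) S = if u \in S then - fourier F S else fourier F S.
Proof.
rewrite /fourier (reindex_inj (can_inj (toggleK u))) /=.
under eq_bigr => A _ do rewrite toggleK chi_toggle.
by case: (u \in S); rewrite // -mulrN -sumrN; under eq_bigr => A _ do rewrite mulrN.
Qed.

End BooleanFourier.

Section MultilinearPolynomials.
Variables (R : nzRingType) (n : nat).
Implicit Types (A S T V W Z : {set 'I_n}) (c : {set 'I_n} -> R).

(* The multilinear polynomial sum_T c_T prod_(i in T) x_i at the 0/1 point with support A. *)
Definition mpeval c A : R := \sum_T c T * (T \subset A)%:R.

Definition mdeg c : nat := \max_(T | c T != 0) #|T|.

Lemma mdeg_max c T : c T != 0 -> (#|T| <= mdeg c)%N.
Proof. exact: (leq_bigmax_cond T). Qed.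

Lemma mdeg_le_dim c : (mdeg c <= n)%N.
Proof.
by apply/bigop.bigmax_leqP => T _; rewrite -[X in (_ <= X)%N](card_ord n) max_card.
Qed.

Lemma mdeg_gt0 c : (0 < mdeg c)%N -> exists T, c T != 0.
Proof.
move=> deg_gt0; apply/existsP; apply: contraTT deg_gt0 => /existsPn c0.
by rewrite -leqNgt; apply/bigop.bigmax_leqP => T; rewrite (negbTE (c0 T)).
Qed.

Lemma mdeg_witness c T0 : c T0 != 0 -> exists2 S, c S != 0 & #|S| = mdeg c.
Proof.
move=> cT0; rewrite /mdeg (bigop.bigmax_eq_arg T0 cT0).
by case: arg_maxnP => // S cS _; exists S.
Qed.

Lemma mpeval_minimal c W : (forall T, T \proper W -> c T = 0) -> mpeval c W = c W.
Proof.
move=> c0; rewrite /mpeval (bigD1 W) //= subxx mulr1 big1 ?addr0 // => T neTW.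
have [sTW|] := boolP (T \subset W); last by rewrite mulr0.
by rewrite c0 ?mul0r // properEneq neTW.
Qed.

Lemma mpeval_set0 c : mpeval c set0 = c set0.
Proof. by apply: mpeval_minimal => T; rewrite properE sub0set andbF. Qed.

(* The restriction of the polynomial to the subcube {Z :|: V | V \subset S},
   as a polynomial in V. *)
Definition mpslice c S Z W : R :=
  \sum_T ((T :&: S == W) && (T :\: S \subset Z))%:R * c T.

Lemma subset_setU_split S Z V T : [disjoint Z & S] -> V \subset S ->
  (T \subset Z :|: V) = (T :&: S \subset V) && (T :\: S \subset Z).
Proof.
move=> /disjoint_setI0 ZS /subsetP VS.
apply/subsetP/andP => [sT|[/subsetP sTS /subsetP sTZ]].
  split; apply/subsetP => x; rewrite !inE.
    move=> /andP[xT xS]; have /setUP[xZ|//] := sT x xT.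
    suff : x \in Z :&: S by rewrite ZS inE.
    by rewrite inE xZ.
  by move=> /andP[xS xT]; have /setUP[//|/VS] := sT x xT; rewrite (negbTE xS).
move=> x xT; rewrite inE; have [xS|xS] := boolP (x \in S).
  by rewrite sTS ?orbT // inE xT xS.
by rewrite sTZ // inE xT xS.
Qed.

Lemma mpeval_slice c S Z V : [disjoint Z & S] -> V \subset S ->
  mpeval c (Z :|: V) = mpeval (mpslice c S Z) V.
Proof.
move=> ZS VS; rewrite /mpeval /mpslice.
under [RHS]eq_bigr => W _ do rewrite mulr_suml.
rewrite exchange_big /=; apply: eq_bigr => T _.
rewrite (bigD1 (T :&: S)) //= big1 ?addr0 => [|W /negbTE neW]; last first.
  by rewrite eq_sym neW /= !mul0r.
rewrite eqxx (subset_setU_split _ ZS VS).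
by case: (T :&: S \subset V); case: (T :\: S \subset Z);
  rewrite /= ?mul1r ?mul0r ?mulr1 ?mulr0.
Qed.

Lemma mpslice_out c S Z W : ~~ (W \subset S) -> mpslice c S Z W = 0.
Proof.
move=> sWS; rewrite /mpslice big1 // => T _.
have [eTW|] := eqVneq (T :&: S) W; last by rewrite mul0r.
by case/negP: sWS; rewrite -eTW subsetIr.
Qed.

Lemma mpslice_top c S Z : (forall T, c T != 0 -> (#|T| <= #|S|)%N) ->
  mpslice c S Z S = c S.
Proof.
move=> Smax; rewrite /mpslice (bigD1 S) //= setIid eqxx setDv sub0set mul1r.
rewrite big1 ?addr0 // => T neTS; have [eTS|] := eqVneq (T :&: S) S; last by rewrite mul0r.
have [->|cT] := eqVneq (c T) 0; first by rewrite mulr0.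
have /proper_card : S \proper T by rewrite properEneq eq_sym neTS -eTS subsetIl.
by rewrite ltnNge Smax.
Qed.

(* A minimal monomial of the slice survives evaluation at its own support. *)
Lemma mpeval_nonzero_on_slice c S Z : c S != 0 ->
  (forall T, c T != 0 -> (#|T| <= #|S|)%N) ->
  [disjoint Z & S] -> exists2 V : {set 'I_n}, V \subset S & mpeval c (Z :|: V) != 0.
Proof.
move=> cS Smax ZS; set e := mpslice c S Z.
have eS : e S != 0 by rewrite /e mpslice_top.
case: (@arg_minnP _ S (fun V => e V != 0) (fun V => #|V|) eS) => V eV Vmin.
have VS : V \subset S by apply: contraNT eV => nVS; rewrite /e mpslice_out.
exists V => //; rewrite (mpeval_slice _ ZS VS) mpeval_minimal // => T /proper_card ltTV.
by apply/eqP; apply: contraTT ltTV => /Vmin; rewrite -leqNgt.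
Qed.

(* Schwartz-Zippel for multilinear polynomials on the boolean cube. *)
Lemma card_mpeval_neq0 c T0 : c T0 != 0 ->
  (2 ^ (n - mdeg c) <= #|[set A | mpeval c A != 0%R]|)%N.
Proof.
move=> cT0; have [S cS eS] := mdeg_witness cT0.
have Smax T : c T != 0 -> (#|T| <= #|S|)%N by rewrite eS; apply: mdeg_max.
have cardD : #|powerset (~: S)| = (2 ^ (n - mdeg c))%N.
  by rewrite card_powerset cardsCs setCK card_ord eS.
rewrite -cardD; apply: leq_trans (leq_imset_card (fun A => A :\: S) _).
apply/subset_leq_card/subsetP => Z; rewrite inE -disjoints_subset => ZS.
have [V VS nzV] := mpeval_nonzero_on_slice cS Smax ZS.
apply/imsetP; exists (Z :|: V); first by rewrite inE.
rewrite setDUl (setDidPl ZS); apply/esym/setUidPl.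
by rewrite (_ : V :\: S = set0) ?sub0set //; apply/eqP; rewrite setD_eq0.
Qed.

Definition mpderiv c (i : 'I_n) T : R := if i \in T then 0 else c (i |: T).

Lemma subset_setU1_notin (i : 'I_n) T A :
  i \notin T -> (T \subset i |: A) = (T \subset A).
Proof.
move=> iT; apply/subsetP/subsetP => sTA x xT; last by rewrite setU1r ?sTA.
by have /setU1P[exi|//] := sTA x xT; rewrite -exi xT in iT.
Qed.

Lemma mpeval_deriv c i A :
  mpeval c (i |: A) - mpeval c (A :\ i) = mpeval (mpderiv c i) A.
Proof.
rewrite /mpeval -sumrB (bigID (fun T => i \in T)) /=.
rewrite [X in _ + X]big1 ?addr0 => [|T iT]; last first.
  by rewrite -mulrBr subset_setU1_notin // subsetD1 iT andbT subrr mulr0.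
rewrite [RHS](bigID (fun T => i \in T)) /= [X in _ = X + _]big1 ?add0r => [|T iT];
  last first.
  by rewrite /mpderiv iT mul0r.
rewrite (reindex_onto (fun T => i |: T) (fun T => T :\ i)) /= => [|T iT]; last first.
  by rewrite setD1K.
apply: eq_big => T.
  rewrite setU11; apply/eqP/idP => [<-|iT]; first by rewrite setD11.
  by rewrite setU1K.
move=> /andP[_ /eqP eT]; have iT : i \notin T by rewrite -eT setD11.
rewrite /mpderiv (negbTE iT) subsetD1 setU11 andbF mulr0 subr0 subUset sub1set setU11.
by rewrite subset_setU1_notin.
Qed.

Lemma mdeg_deriv c i : (mdeg (mpderiv c i) <= (mdeg c).-1)%N.
Proof.
apply/bigop.bigmax_leqP => T; rewrite /mpderiv.
case: ifP => [_|iT]; first by rewrite eqxx.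
by move/mdeg_max; rewrite cardsU1 iT; case: (mdeg c).
Qed.

End MultilinearPolynomials.

(* Unnormalized: the number of points, not the fraction, at which flipping i changes g. *)
Definition influence n (g : {set 'I_n} -> bool) (i : 'I_n) : nat :=
  #|[set A | g A != g (toggle i A)]|.

Definition bsign (R : nzRingType) n (g : {set 'I_n} -> bool) A : R := 1 - 2 * (g A)%:R.

Section Influence.
Variables (R : realFieldType) (n : nat) (g : {set 'I_n} -> bool).
Implicit Types (A S T : {set 'I_n}).
Local Notation F := (@bsign R n g).
Local Notation K := ((2 ^ n)%:R : R).

Lemma bsign_sqr A : F A * F A = 1.
Proof. by rewrite /bsign; case: (g A); rewrite /= ?mulr1n ?mulr0n; ring. Qed.

Lemma bsign_neq A B : 2 * ((g A != g B)%:R : R) = 1 - F A * F B.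
Proof.
by rewrite /bsign; case: (g A); case: (g B); rewrite /= ?mulr1n ?mulr0n; ring.
Qed.

Lemma parseval_bsign : \sum_S fourier F S ^+ 2 = 1.
Proof.
have := plancherel F F; under eq_bigr => A _ do rewrite bsign_sqr.
rewrite sumr_const card_sets_ord -[X in X = _]mulr1 => /(mulfI (pow2_neq0 _ _)) ->.
by apply: eq_bigr => S _; rewrite expr2.
Qed.

Lemma influenceE i :
  (influence g i)%:R = K * \sum_(S : {set 'I_n} | i \in S) fourier F S ^+ 2.
Proof.
apply: (@mulfI _ 2); first by rewrite pnatr_eq0.
have -> : 2 * (influence g i)%:R = \sum_A (1 - F A * F (toggle i A)).
  rewrite /influence -sum1_card natr_sum mulr_sumr big_mkcond /=.
  apply: eq_bigr => A _; rewrite -bsign_neq inE.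
  by case: (g A != _); rewrite /= ?mulr1n ?mulr0.
rewrite sumrB (plancherel F (fun A => F (toggle i A))) sumr_const card_sets_ord.
have -> : \sum_S fourier F S * fourier (fun A => F (toggle i A)) S
          = 1 - 2 * \sum_(S : {set 'I_n} | i \in S) fourier F S ^+ 2.
  under eq_bigr => S _ do rewrite fourier_toggle.
  rewrite (bigID (fun S => i \in S)) /=.
  under eq_bigr => S iS do rewrite iS mulrN -expr2.
  under [X in _ + X = _]eq_bigr => S /negbTE iS do rewrite iS -expr2.
  by have := parseval_bsign; rewrite (bigID (fun S => i \in S)) /= sumrN; lra.
ring.
Qed.

Variable c : {set 'I_n} -> R.
Hypothesis g_mpeval : forall A, (g A)%:R = mpeval c A.

Lemma fourier_bsign_high S : (mdeg c < #|S|)%N -> fourier F S = 0.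
Proof.
move=> degS; have [u uS] : exists u, u \in S.
  by apply/set0Pn; rewrite -card_gt0 (leq_ltn_trans _ degS).
rewrite /fourier; suff -> : \sum_A F A * chi R S A = 0 by rewrite mulr0.
under eq_bigr => A _ do rewrite /bsign g_mpeval mulrBl mul1r.
rewrite sumrB (eq_bigr (fun A => (set0 \subset A)%:R * chi R S A)) => [|A _]; last first.
  by rewrite sub0set mul1r.
rewrite (sum_chi_subset_eq0 _ uS (negbT (in_set0 u))) sub0r.
under eq_bigr => A _ do rewrite /mpeval -mulrA mulr_suml.
rewrite -mulr_sumr exchange_big /= big1 ?mulr0 ?oppr0 // => T _.
under eq_bigr => A _ do rewrite -mulrA.
have [-> | cT] := eqVneq (c T) 0; first by rewrite big1 // => A _; rewrite mul0r.
have /subsetPn [w wS wT] : ~~ (S \subset T).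
  apply: contraTN degS => /subset_leq_card leST.
  by rewrite -leqNgt (leq_trans leST) ?mdeg_max.
by rewrite -mulr_sumr (sum_chi_subset_eq0 _ wS wT) mulr0.
Qed.

Lemma total_influence_le : (\sum_(i < n) influence g i <= mdeg c * 2 ^ n)%N.
Proof.
rewrite -(ler_nat R) natr_sum.
under eq_bigr => i _ do rewrite influenceE.
rewrite -mulr_sumr natrM [X in _ <= X]mulrC ler_pM2l ?ltr0n ?expn_gt0 //.
have -> : \sum_(i < n) \sum_(S : {set 'I_n} | i \in S) fourier F S ^+ 2
          = \sum_(S : {set 'I_n}) #|S|%:R * fourier F S ^+ 2.
  under eq_bigr => i _ do rewrite big_mkcond.
  rewrite exchange_big /=; apply: eq_bigr => S _.
  by rewrite -big_mkcond sumr_const mulr_natl.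
rewrite -[X in _ <= X]mulr1 -[X in _ <= _ * X]parseval_bsign mulr_sumr.
apply: ler_sum => S _.
have [leSd|ltdS] := leqP #|S| (mdeg c).
  by apply: ler_wpM2r; [exact: sqr_ge0 | rewrite ler_nat].
by rewrite fourier_bsign_high // expr0n /= !mulr0.
Qed.

Lemma influence_ge i :
  g [set i] != g set0 -> (2 ^ (n - (mdeg c).-1) <= influence g i)%N.
Proof.
move=> gi; set e := mpderiv c i.
have diff_neq0 (b1 b2 : bool) : ((b1%:R - b2%:R : R) != 0) = (b1 != b2).
  by case: b1; case: b2;
    rewrite /= ?mulr1n ?mulr0n ?subrr ?subr0 ?sub0r ?oppr_eq0 ?oner_eq0 ?eqxx.
have eE A : mpeval e A = (g (i |: A))%:R - (g (A :\ i))%:R.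
  by rewrite -mpeval_deriv !g_mpeval.
have e0 : e set0 != 0 by rewrite -mpeval_set0 eE setU0 set0D diff_neq0.
apply: leq_trans (leq_pexp2l _ (leq_sub2l n (mdeg_deriv c i))) _ => //.
apply: leq_trans (card_mpeval_neq0 e0) _; apply/eq_leq/eq_card => A.
rewrite !inE eE diff_neq0 /toggle; have [iA|iA] := boolP (i \in A).
  by have -> : i |: A = A by apply/setUidPr; rewrite sub1set.
have -> : A :\ i = A by apply/setDidPl; rewrite disjoint_sym disjoints1.
by rewrite eq_sym.
Qed.

Lemma card_sensitive_le :
  (#|[set i | g [set i] != g set0]| * 2 ^ (n - (mdeg c).-1) <= mdeg c * 2 ^ n)%N.
Proof.
set Sens := [set i | g [set i] != g set0].
apply: leq_trans total_influence_le.
rewrite -sum1_card big_distrl /= [X in (_ <= X)%N](bigID (mem Sens)) /=.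
apply: leq_trans (leq_addr _ _); apply: leq_sum => i; rewrite mul1n inE.
exact: influence_ge.
Qed.

End Influence.

Lemma mul_pow2_lt_pow4 k : (k.+1 * 2 ^ k.+1 < 4 ^ k.+1)%N.
Proof.
elim: k => [//|k IH]; rewrite [(2 ^ k.+2)%N]expnS [(4 ^ k.+2)%N]expnS.
move: IH; set x := (2 ^ k.+1)%N; set y := (4 ^ k.+1)%N; nia.
Qed.

Lemma le_pow4_of_sensitivity n M k : (2 <= n)%N -> (n <= M.*2.+1)%N -> (k <= n)%N ->
  (M * 2 ^ (n - k.-1) <= k * 2 ^ n)%N -> (n <= 4 ^ k)%N.
Proof.
case: k => [|k] n2 nM kn; first by rewrite mul0n leqn0 muln_eq0 expn_eq0 /=; lia.
rewrite /= -{2}(subnK (ltnW kn)) expnD mulnCA mulnC leq_pmul2l ?expn_gt0 // => Mk.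
apply: leq_trans (mul_pow2_lt_pow4 k); rewrite expnS; lia.
Qed.

Module LnBound.
Import Stdlib.Reals.Reals.
Local Open Scope R_scope.

Lemma ln2_lt_1 : ln 2 < 1.
Proof.
rewrite -[X in _ < X](ln_exp 1); apply: ln_increasing; first Lra.lra.
by have := exp_ineq1 1; Lra.lra.
Qed.

Lemma half_ln_le (x : R) (k : nat) : 1 <= x -> x <= INR 4 ^ k -> / 2 * ln x <= INR k.
Proof.
move=> x1 x4; have four : INR 4 = 2 * 2 by simpl; Lra.lra.
have : ln x <= INR k * (ln 2 + ln 2).
  rewrite -ln_mult -?four -?ln_pow; try Lra.lra.
  case: (Rle_lt_or_eq_dec _ _ x4) => [lt|->]; [left; apply: ln_increasing | right]; Lra.lra.
by have := ln2_lt_1; have := pos_INR k; Lra.nra.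
Qed.
End LnBound.

Lemma half_ln_natr_le (N k : nat) : (1 <= N)%N -> (N <= 4 ^ k)%N ->
  2^-1 * Rpower.ln N%:R <= k%:R.
Proof.
rewrite -(ler_nat Rdefinitions.R) -(ler_nat Rdefinitions.R) natrX -!INRE -RpowE.
by move=> /RleP N1 /RleP N4; apply/RleP; rewrite -RinvE; apply: LnBound.half_ln_le.
Qed.

Lemma restr_linearT N (f : 'I_N -> bool) : restr_linear f.
Proof.
exists (fun j => (f j)%:R) => i; rewrite (bigD1 i) //= /basis_vec eqxx mulr1.
by rewrite big1 ?addr0 // => j /negbTE ->; rewrite mulr0.
Qed.

Lemma ml_eval_mem N (c : {set 'I_N} -> Rdefinitions.R) (A : {set 'I_N}) :
  ml_eval c (fun j => j \in A) = mpeval c A.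
Proof.
apply: eq_bigr => S _; congr (_ * _).
have [sSA|/subsetPn[j jS jA]] := boolP (S \subset A).
  by rewrite big1 // => i /(subsetP sSA) ->.
by rewrite (bigD1 j) //= (negbTE jA) mul0r.
Qed.

Lemma sum_odd_ord N : (\sum_(i < N) odd i)%N = N./2.
Proof.
elim: N => [|N IH]; first by rewrite big_ord0.
by rewrite big_ord_recr /= IH uphalf_half addnC.
Qed.

Lemma card_odd_ord N : #|[set i : 'I_N | odd i]| = N./2.
Proof.
rewrite -sum_odd_ord -sum1_card big_mkcond.
by apply: eq_bigr => i _; rewrite inE; case: odd.
Qed.

Lemma card_odd_neq N (b : bool) : (N <= #|[set i : 'I_N | odd i != b]|.*2.+1)%N.
Proof.
have := cardsC [set i : 'I_N | odd i]; have := odd_double_half N.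
rewrite card_ord card_odd_ord -!muln2; case: b.
  rewrite (_ : [set i : 'I_N | odd i != true] = ~: [set i : 'I_N | odd i]); first lia.
  by apply/setP => i; rewrite !inE; case: odd.
rewrite (_ : [set i : 'I_N | odd i != false] = [set i : 'I_N | odd i]) ?card_odd_ord;
  first lia.
by apply/setP => i; rewrite !inE; case: odd.
Qed.

Theorem mainTheorem10 :
  exists C : Rdefinitions.R, 0 < C /\ exists N0 : nat, forall N : nat, (N0 <= N)%N ->
    exists f : 'I_N -> bool, restr_linear f /\
      forall fbar : cube N -> bool,
        (forall i : 'I_N, fbar (basis_vec i) = f i) ->
        degree_ge fbar (C * Rpower.ln (N%:R)).
Proof.
exists 2^-1; split; first by rewrite invr_gt0 ltr0n.
exists 2%N => N N2; exists (fun i => odd i); split; first exact: restr_linearT.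
move=> fbar fbar_odd c c_rep.
pose g (A : {set 'I_N}) := fbar (fun j => j \in A).
have g_mpeval A : (g A)%:R = mpeval c A by rewrite c_rep ml_eval_mem.
have g1 i : g [set i] = odd i.
  by rewrite -fbar_odd; congr fbar; apply: functional_extensionality => j; rewrite inE.
have nM : (N <= #|[set i | g [set i] != g set0]|.*2.+1)%N.
  rewrite (eq_card (B := [set i : 'I_N | odd i != g set0])) ?card_odd_neq // => i.
  by rewrite !inE g1.
have N4 := le_pow4_of_sensitivity N2 nM (mdeg_le_dim c) (card_sensitive_le g_mpeval).
have [T0 cT0] : exists T0, c T0 != 0.
  by apply: mdeg_gt0; rewrite lt0n; apply: contraTneq N4 => ->; rewrite -ltnNge.
have [S cS eS] := mdeg_witness cT0; exists S; split; first exact/eqP.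
by rewrite eS half_ln_natr_le // ltnW.
Qed.
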